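(* Let $G$ be a nilpotent group (not assumed finite). Then $G\in\mathfrak{Y}_n$ if and only if $G$ is either abelian or a finite minimal non-abelian $p$-group for some prime $p$.
   Context: $\mathfrak{Y}_n$ denotes the class of all groups $G$ (finite or infinite) such that $N_G(A)=A$ for every non-abelian subgroup $A\le G$. A group is minimal non-abelian if it is non-abelian but all its proper subgroups are abelian. *)

From Stdlib Require Import List.
From mathcomp Require Import ssreflect ssrbool ssrnat prime.

Record group := Group {
  gT :> Type;
  gmul : gT -> gT -> gT;
  gone : gT;
  ginv : gT -> gT;
  gmulA : forall x y z, gmul x (gmul y z) = gmul (gmul x y) z;
  gmul1 : forall x, gmul gone x = x;
  gmulV : forall x, gmul (ginv x) x = gone
}.

Section Defs.
Variable G : group.

Definition is_subgroup (A : G -> Prop) : Prop :=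
  A (gone G) /\
  (forall x y, A x -> A y -> A (gmul G x y)) /\
  (forall x, A x -> A (ginv G x)).

Definition abelian_set (A : G -> Prop) : Prop :=
  forall x y, A x -> A y -> gmul G x y = gmul G y x.

Definition conj (x g : G) : G := gmul G (gmul G (ginv G g) x) g.

Definition normalizer (A : G -> Prop) : G -> Prop :=
  fun g => forall x, A x <-> A (conj x g).

Definition in_Yn : Prop :=
  forall A : G -> Prop, is_subgroup A -> ~ abelian_set A ->
    forall g, normalizer A g <-> A g.

Definition abelian_group : Prop := abelian_set (fun _ => True).

Definition gen (S : G -> Prop) : G -> Prop :=
  fun x => forall H, is_subgroup H -> (forall y, S y -> H y) -> H x.

Definition comm (x y : G) : G :=
  gmul G (gmul G (ginv G x) (ginv G y)) (gmul G x y).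

Fixpoint lcs (n : nat) : G -> Prop :=
  match n with
  | 0 => fun _ => True
  | S m => gen (fun z => exists x y, lcs m x /\ z = comm x y)
  end.

Definition nilpotent : Prop := exists n, forall x, lcs n x -> x = gone G.

Definition minimal_nonabelian : Prop :=
  ~ abelian_group /\
  forall H : G -> Prop, is_subgroup H -> (exists g, ~ H g) -> abelian_set H.

Definition finite_pgroup (p : nat) : Prop :=
  exists (k : nat) (l : list G),
    NoDup l /\ (forall x, In x l) /\ length l = p ^ k.

End Defs.

From Pilot Require Import Defs.
From Stdlib Require Import List Classical.
From mathcomp Require Import ssreflect ssrbool ssrnat prime.
From HB Require Import structures.
From mathcomp Require Import all_boot order ssralg ssrnum ssrint intdiv zify ring.
From mathcomp Require boolp all_fingroup all_solvable.

(* A nilpotent group satisfies the normalizer condition: if [H] is proper and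
   [L_(i+1)] lies in [H] but [L_i] does not, any [g] in [L_i] outside [H]
   normalizes [H].  As non-abelian subgroups of a Y_n-group are
   self-normalizing, a non-abelian nilpotent Y_n-group is minimal non-abelian
   (and such groups are trivially in Y_n).  In a nilpotent minimal non-abelian
   group the centralizer of a non-central [x] is normal, so for non-commuting
   [a], [b] the commutator [c = [a, b]] commutes with [a] and [b], hence with
   the whole group, which [<a, b>] is; every element has the form [a^i b^j c^k].
   If [c^(q^2) <> 1] for some [q >= 2], then [a^q] and [b^q] do not commute and
   generate the group again; writing [a] and [b] in terms of them yields
   relations whose determinant [D] is [1] modulo [q], so [a^D] and [b^D] lie in
   [<c>] and [c^D = 1]: the group is finite.  Finally, a finite nilpotent group
   is the direct product of its Sylow subgroups, and two proper factors would
   both be abelian. *)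

Set Implicit Arguments.
Unset Strict Implicit.
Unset Printing Implicit Defensive.

Import GRing.Theory.

Local Open Scope group_scope.

Lemma int_ind_iff (P : int -> Prop) :
  P 0 -> (forall z, P z <-> P (z + 1)%R) -> forall z, P z.
Proof.
move=> P0 PS z; elim/int_rect: z => [//|n|n] Pn.
  have En : (n.+1%:Z = n%:Z + 1)%R by lia.
  by rewrite En; apply/(PS n).
have En : (- n.+1%:Z = - n%:Z - 1)%R by lia.
by rewrite En; apply/(PS (- n%:Z - 1)%R); rewrite subrK.
Qed.

Lemma InP (T : eqType) (x : T) (s : seq T) : reflect (In x s) (x \in s).
Proof.
elim: s => [|y s IHs] /=; first by constructor.
rewrite in_cons; apply: (iffP orP) => [[/eqP -> | /IHs] | [-> | /IHs]]; by [left | right].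
Qed.

Lemma uniq_NoDup (T : eqType) (s : seq T) : uniq s -> NoDup s.
Proof.
elim: s => [|x s IHs] /=; first by constructor.
by case/andP=> xs /IHs; constructor=> // /InP; apply/negP.
Qed.

Lemma size_length (T : Type) (s : seq T) : size s = length s.
Proof. by elim: s => //= x s ->. Qed.

Lemma exists_switch (P : nat -> Prop) n : ~ P 0 -> P n -> exists i, ~ P i /\ P i.+1.
Proof.
move=> P0; elim: n => [//|n IHn] Pn1.
by case: (classic (P n)) => [/IHn | Pn]; last exists n.
Qed.

Lemma edivz_nat (z : int) (N : nat) :
  (0 < N)%N -> exists m : int, exists2 r : nat, (r < N)%N & z = (m * N + r)%R.
Proof.
move=> N0; have N0' : (N%:Z != 0)%R by lia.
exists (divz z N), `|modz z N|%N.
  by have := ltz_pmod z (N0 : 0 < N%:Z)%R; have := modz_ge0 z N0'; lia.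
by rewrite {1}(divz_eq z N); have := modz_ge0 z N0'; lia.
Qed.

Definition expgz (G : groupType) (x : G) (z : int) : G :=
  match z with Posz n => x ^+ n | Negz n => x ^- n.+1 end.
Arguments expgz {G} x z%_R.
Notation "x ^@ z" := (expgz x z) (at level 29, left associativity) : group_scope.

Section IntegerPowers.
Variable G : groupType.
Implicit Types (x y : G) (i j : int).

Lemma expgz0 x : x ^@ 0 = 1. Proof. by []. Qed.
Lemma expgz1 x : x ^@ 1 = x. Proof. by []. Qed.

Lemma expgzS x i : x ^@ (i + 1) = x ^@ i * x.
Proof.
case: i => [n|[|n]].
- have -> : (n%:Z + 1 = n.+1%:Z)%R by lia.
  exact: expgSr.
- by rewrite /= mulVg.
- have -> : (Negz n.+1 + 1 = Negz n)%R by rewrite !NegzE; lia.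
  by rewrite /= [x ^+ n.+2]expgS invgM mulgVK.
Qed.

Lemma expgzD x i j : x ^@ (i + j) = x ^@ i * x ^@ j.
Proof.
move: j; apply: int_ind_iff => [|j]; first by rewrite addr0 mulg1.
rewrite addrA !expgzS mulgA.
by split=> [-> | /mulIg].
Qed.

Lemma expgzN x i : x ^@ (- i) = (x ^@ i)^-1.
Proof. by apply/esym/mulg1_eq; rewrite -expgzD subrr. Qed.

Lemma expgzM x i j : x ^@ (i * j) = (x ^@ i) ^@ j.
Proof.
move: j; apply: int_ind_iff => [|j]; first by rewrite mulr0.
rewrite mulrDr mulr1 (expgzD x) expgzS.
by split=> [-> | /mulIg].
Qed.

Lemma expgz1n i : (1 : G) ^@ i = 1.
Proof.
move: i; apply: int_ind_iff => [//|i]; rewrite expgzS mulg1.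
by split.
Qed.

Lemma conjXgz x y i : (x ^@ i) ^ y = (x ^ y) ^@ i.
Proof.
move: i; apply: int_ind_iff => [|i]; first exact: conj1g.
rewrite !expgzS conjMg.
by split=> [-> | /mulIg].
Qed.

Lemma commuteXz x y i : commute x y -> commute x (y ^@ i).
Proof.
move=> cxy; apply/esym; rewrite conjgC conjXgz.
by have /conjg_fixP -> : [~ y, x] == 1 by apply/commgP.
Qed.

Lemma commuteXz2 x y i j : commute x y -> commute (x ^@ i) (y ^@ j).
Proof. by move=> cxy; apply/commuteXz/esym/commuteXz. Qed.

Lemma expgzMn x y i : commute x y -> (x * y) ^@ i = x ^@ i * y ^@ i.
Proof.
move=> cxy; move: i; apply: int_ind_iff => [|i]; first by rewrite mulg1.
have cxyi : commute x (y ^@ i) by exact: commuteXz.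
rewrite !expgzS -[x ^@ i * x * _]mulgA [x * (_ * _)]mulgA cxyi -(mulgA _ x) mulgA.
by split=> [-> | /mulIg].
Qed.

End IntegerPowers.

Section CentralCommutator.
Variables (G : groupType) (a b : G).
Let c := [~ a, b].
Hypotheses (cA : commute c a) (cB : commute c b).
Implicit Types (g : G) (i j k : int).

Lemma mul_cXz_aXz k i g : c ^@ k * (a ^@ i * g) = a ^@ i * (c ^@ k * g).
Proof. by rewrite !mulgA (commuteXz2 _ _ cA). Qed.

Lemma mul_cXz_bXz k j g : c ^@ k * (b ^@ j * g) = b ^@ j * (c ^@ k * g).
Proof. by rewrite !mulgA (commuteXz2 _ _ cB). Qed.

Lemma conj_a_b : a ^ b = a * c.
Proof. by rewrite /c commgEl mulVKg. Qed.

Lemma conj_a_bXz j : a ^ (b ^@ j) = a * c ^@ j.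
Proof.
move: j; apply: int_ind_iff => [|j]; first by rewrite conjg1 mulg1.
have cbj : (c ^@ j) ^ b = c ^@ j.
  by apply/conjg_fixP/commgP; exact: esym (commuteXz j (esym cB)).
have -> : a * c ^@ (j + 1) = (a * c ^@ j) ^ b.
  by rewrite conjMg cbj conj_a_b expgzS -mulgA (commuteXz _ (commute_refl c)).
by rewrite expgzS conjgM; split=> [-> | /conjg_inj].
Qed.

Lemma conj_aXz_bXz i j : (a ^@ i) ^ (b ^@ j) = a ^@ i * c ^@ (i * j).
Proof.
rewrite conjXgz conj_a_bXz expgzMn; last exact: commuteXz j (esym cA).
by rewrite mulrC expgzM.
Qed.

Lemma bXz_aXz i j : b ^@ j * a ^@ i = a ^@ i * b ^@ j * c ^@ (- (i * j)).
Proof.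
by rewrite [a ^@ i * _]conjgC conj_aXz_bXz -!mulgA -expgzD subrr expgz0 mulg1.
Qed.

Lemma mul_bXz_aXz i j g :
  b ^@ j * (a ^@ i * g) = a ^@ i * (b ^@ j * (c ^@ (- (i * j)) * g)).
Proof. by rewrite !mulgA bXz_aXz. Qed.

Definition ab_form i j g := exists k, g = a ^@ i * b ^@ j * c ^@ k.
Arguments ab_form i%_R j%_R g.

Lemma ab_form1 : ab_form 0 0 1.
Proof. by exists 0; rewrite !mulg1. Qed.

Lemma ab_form_a : ab_form 1 0 a.
Proof. by exists 0; rewrite expgz1 !mulg1. Qed.

Lemma ab_form_b : ab_form 0 1 b.
Proof. by exists 0; rewrite expgz1 mul1g mulg1. Qed.

Lemma ab_formM i j i' j' g g' :
  ab_form i j g -> ab_form i' j' g' -> ab_form (i + i') (j + j') (g * g').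
Proof.
move=> [k ->] [k' ->]; exists (- (i' * j) + (k + k'))%R.
by rewrite !expgzD -!mulgA mul_cXz_aXz mul_cXz_bXz mul_bXz_aXz mul_cXz_bXz.
Qed.

Lemma ab_formV i j g : ab_form i j g -> ab_form (- i) (- j) g^-1.
Proof.
move=> [k ->]; exists (- k + - (- i * - j))%R.
rewrite !invgM -!expgzN bXz_aXz expgzD -!mulgA.
by rewrite mul_cXz_aXz mul_cXz_bXz.
Qed.

Lemma ab_formXz i j g n : ab_form i j g -> ab_form (i * n) (j * n) (g ^@ n).
Proof.
move=> gij; move: n; apply: int_ind_iff => [|n].
  by rewrite !mulr0 expgz0; exact: ab_form1.
split=> [gn | gn1].
  by rewrite expgzS !mulrDr !mulr1; exact: ab_formM.
have := ab_formM gn1 (ab_formV gij).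
by rewrite expgzS mulgK !mulrDr !mulr1 !addrK.
Qed.

Lemma ab_relation_det x1 y1 x2 y2 :
    ab_form x1 y1 1 -> ab_form x2 y2 1 ->
  ab_form (x1 * y2 - x2 * y1) 0 1 /\ ab_form 0 (x1 * y2 - x2 * y1) 1.
Proof.
move=> r1 r2; split.
  have := ab_formM (ab_formXz y2 r1) (ab_formXz (- y1) r2).
  rewrite !expgz1n mulg1 (_ : y1 * y2 + y2 * - y1 = 0)%R; last by ring.
  by rewrite (_ : x1 * y2 + x2 * - y1 = x1 * y2 - x2 * y1)%R; last by ring.
have := ab_formM (ab_formXz (- x2) r1) (ab_formXz x1 r2).
rewrite !expgz1n mulg1 (_ : x1 * - x2 + x2 * x1 = 0)%R; last by ring.
by rewrite (_ : y1 * - x2 + y2 * x1 = x1 * y2 - x2 * y1)%R; last by ring.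
Qed.

End CentralCommutator.

Arguments ab_form1 {G a b}.
Arguments ab_form_a {G a b}.
Arguments ab_form_b {G a b}.

Section GroupInstance.
Variable G : Defs.group.

Lemma gmulgV (x : G) : gmul G x (ginv G x) = gone G.
Proof.
rewrite -[gmul G x _](gmul1 G) -{1}(gmulV G (ginv G x)) -gmulA.
by rewrite [gmul G (ginv G x) _]gmulA gmulV gmul1 gmulV.
Qed.

Lemma gmulg1 (x : G) : gmul G x (gone G) = x.
Proof. by rewrite -(gmulV G x) gmulA gmulgV gmul1. Qed.

(* Classical choice makes the carrier a choiceType, so MathComp's group
   theory applies to it. *)
HB.instance Definition _ := boolp.gen_eqMixin G.
HB.instance Definition _ := boolp.gen_choiceMixin G.
HB.instance Definition _ :=
  isGroup.Build G (@gmulA G) (@gmul1 G) gmulg1 (@gmulV G) gmulgV.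

End GroupInstance.

Section Subgroups.
Variable G : Defs.group.
Implicit Types (H : G -> Prop) (x y g : G).

Lemma conjE x g : conj G x g = x ^ g.
Proof. exact: esym (mulgA _ _ _). Qed.

Lemma commE x y : comm G x y = [~ x, y].
Proof. exact: esym (mulgA _ _ _). Qed.

Lemma subgroup1 H : is_subgroup G H -> H 1.
Proof. by case. Qed.

Lemma subgroupM H x y : is_subgroup G H -> H x -> H y -> H (x * y).
Proof. by case=> _ [HM _]; apply: HM. Qed.

Lemma subgroupV H x : is_subgroup G H -> H x -> H x^-1.
Proof. by case=> _ [_ HV]; apply: HV. Qed.

Lemma cent1_subgroup x : is_subgroup G (commute x).
Proof.
split; first exact: commute1.
by split=> [y z | y]; [exact: commuteM | exact: commuteV].
Qed.

End Subgroups.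

Section Normalizers.
Variable G : Defs.group.
Implicit Types (H : G -> Prop) (x y g : G).

Lemma subgroup_normalizer_self H h : is_subgroup G H -> H h -> normalizer G H h.
Proof.
move=> sH Hh x; rewrite conjE; split=> [Hx | Hxh].
  by rewrite conjgE; apply: (subgroupM sH); [exact: subgroupV | exact: subgroupM].
rewrite -(conjgK h x) conjgE invgK; apply: (subgroupM sH) => //.
by apply: (subgroupM sH) => //; exact: subgroupV.
Qed.

Lemma normalizer_subgroup H : is_subgroup G H -> is_subgroup G (normalizer G H).
Proof.
move=> sH; split; first by move=> x; rewrite conjE conjg1.
split=> [g h Ng Nh x | g Ng x]; rewrite !conjE.
  by rewrite conjgM -conjE -(Nh (x ^ g)) -conjE -(Ng x).
by have := Ng (x ^ g^-1); rewrite conjE conjgKV => Nx; exact: iff_sym Nx.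
Qed.

Hypothesis nilG : nilpotent G.

Lemma nilpotent_normalizer_grows H :
  is_subgroup G H -> (exists g, ~ H g) -> exists2 g, ~ H g & normalizer G H g.
Proof.
move: nilG => [n lcs_n1] sH [g0 Hg0].
have [i [lcs_i lcs_i1]] :
    exists i, ~ (forall x, lcs G i x -> H x) /\ (forall x, lcs G i.+1 x -> H x).
  apply: (@exists_switch _ n) => [lcs0 | x /lcs_n1 ->]; last exact: subgroup1.
  exact/Hg0/lcs0.
have [g lcs_g Hg] : exists2 g, lcs G i g & ~ H g.
  apply: NNPP => none; apply: lcs_i => x lcs_x.
  by apply: NNPP => Hx; apply: none; exists x.
exists g => // x; rewrite conjE.
have Hxg : H [~ x, g].
  rewrite -invgR -commE; apply: (subgroupV sH); apply: lcs_i1 => K _; apply.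
  by exists g, x.
have -> : x ^ g = x * [~ x, g] by rewrite commgEl mulVKg.
split=> [Hx | Hxc]; first exact: subgroupM.
by rewrite -(mulgK [~ x, g] x); apply: (subgroupM sH) => //; apply: subgroupV.
Qed.

Lemma Yn_minimal_nonabelian : in_Yn G -> ~ abelian_group G -> minimal_nonabelian G.
Proof.
move=> YnG nabG; split=> // H sH Hproper; apply: NNPP => nabH.
have [g Hg NHg] := nilpotent_normalizer_grows sH Hproper.
exact/Hg/(YnG H sH nabH).
Qed.

End Normalizers.

Section MinimalNonabelian.
Variable G : Defs.group.
Hypothesis minG : minimal_nonabelian G.
Implicit Types (H : G -> Prop) (x y g : G).

Lemma minimal_nonabelian_full H :
  is_subgroup G H -> ~ abelian_set G H -> forall g, H g.
Proof.
move=> sH nabH g; apply: NNPP => Hg.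
exact/nabH/(minG.2 H sH (ex_intro _ g Hg)).
Qed.

Lemma minimal_nonabelian_full_commute H x y :
  is_subgroup G H -> H x -> H y -> ~ commute x y -> forall g, H g.
Proof.
move=> sH Hx Hy nxy; apply: minimal_nonabelian_full => // abH.
exact/nxy/abH.
Qed.

Lemma minimal_nonabelian_Yn : in_Yn G.
Proof.
move=> H sH nabH g; have Hfull := minimal_nonabelian_full sH nabH.
by split=> [_ | _ x]; last split.
Qed.

Hypothesis nilG : Defs.nilpotent G.

Lemma cent1_normal x y : ~ commute x y -> forall g, normalizer G (commute x) g.
Proof.
move=> nxy; have sCx := cent1_subgroup x.
have [g nxg NCg] := nilpotent_normalizer_grows nilG sCx (ex_intro _ y nxy).
apply: (minimal_nonabelian_full_commute (normalizer_subgroup sCx) _ NCg nxg).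
exact: subgroup_normalizer_self (commute_refl x).
Qed.

Lemma commg_central x y z : commute [~ x, y] z.
Proof.
case: (classic (commute x y)) => [/commgP/eqP -> | nxy].
  exact/esym/commute1.
have Cx_c : commute x [~ x, y].
  rewrite commgEl; apply: commuteM; first exact/commuteV/commute_refl.
  by have := cent1_normal nxy y x; rewrite conjE => /iffLR; apply; exact: commute_refl.
have Cy_c : commute y [~ x, y].
  rewrite commgEr; apply: commuteM (commute_refl y).
  have nyx : ~ commute y x by move/esym.
  have := cent1_normal nyx x y^-1; rewrite conjE => /iffLR; apply.
  exact/commuteV/commute_refl.
exact: minimal_nonabelian_full_commute
  (cent1_subgroup [~ x, y]) (esym Cx_c) (esym Cy_c) nxy z.
Qed.

End MinimalNonabelian.

Section Finiteness.
Variable G : Defs.group.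
Hypotheses (minG : minimal_nonabelian G) (nilG : Defs.nilpotent G).
Variables a b : G.
Hypothesis nab : ~ commute a b.
Local Notation c := [~ a, b].
Let cA : commute c a := commg_central minG nilG a b a.
Let cB : commute c b := commg_central minG nilG a b b.
Implicit Types (g : G) (i j k q : int).

Definition ab_multiples q g := exists i j, ab_form a b (q * i) (q * j) g.
Arguments ab_multiples q%_R g.

Lemma ab_multiples_subgroup q : is_subgroup G (ab_multiples q).
Proof.
split; first by exists 0, 0; rewrite mulr0; exact: ab_form1.
split=> [g g' [i [j gij]] [i' [j' gij']] | g [i [j gij]]].
  by exists (i + i')%R, (j + j')%R; rewrite !mulrDr; exact: ab_formM.
by exists (- i)%R, (- j)%R; rewrite !mulrN; exact: ab_formV.
Qed.

Lemma ab_form_total g : exists i j, ab_form a b i j g.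
Proof.
have S1a : ab_multiples 1 a by exists 1%R, 0; rewrite mulr1 mulr0; exact: ab_form_a.
have S1b : ab_multiples 1 b by exists 0, 1%R; rewrite mulr1 mulr0; exact: ab_form_b.
have [i [j gij]] := minimal_nonabelian_full_commute minG (ab_multiples_subgroup 1) S1a S1b nab g.
by exists (1 * i)%R, (1 * j)%R.
Qed.

Lemma ab_relation_exponent D : ab_form a b D 0 1 -> c ^@ D = 1.
Proof.
case=> k; rewrite expgz0 mulg1 => /esym/(canRL (mulgK _)); rewrite mul1g => aD.
have := conj_aXz_bXz cA cB D 1; rewrite mulr1 expgz1 aD.
have /conjg_fixP -> : [~ (c ^@ k)^-1, b] == 1.
  by apply/commgP; exact: esym (commuteV (commuteXz k (esym cB))).
by rewrite -{1}[(c ^@ k)^-1]mulg1 => /mulgI/esym.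
Qed.

Lemma ab_relation_exists q : (2 <= q)%R -> c ^@ (q * q) <> 1 ->
  exists2 D : int, D != 0 & ab_form a b D 0 1 /\ ab_form a b 0 D 1.
Proof.
move=> q_ge2 cqq.
have Sa : ab_multiples q (a ^@ q).
  exists 1%R, 0; have := ab_formXz cA cB q ab_form_a.
  by rewrite mulr1 mulr0 mul1r mul0r.
have Sb : ab_multiples q (b ^@ q).
  exists 0, 1%R; have := ab_formXz cA cB q ab_form_b.
  by rewrite mulr1 mulr0 mul1r mul0r.
have nq : ~ commute (a ^@ q) (b ^@ q).
  move=> cq; apply: cqq; apply: invg_inj; rewrite -expgzN invg1.
  by apply: (mulgI (a ^@ q * b ^@ q)); rewrite -bXz_aXz // cq mulg1.
have Sfull := minimal_nonabelian_full_commute minG (ab_multiples_subgroup q) Sa Sb nq.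
have [i [j Saij]] := Sfull a; have [i' [j' Sbij]] := Sfull b.
have := ab_formM cA cB ab_form_a (ab_formV cA cB Saij); rewrite mulgV sub0r => ra.
have := ab_formM cA cB ab_form_b (ab_formV cA cB Sbij); rewrite mulgV sub0r => rb.
have [rD1 rD2] := ab_relation_det cA cB ra rb.
exists ((1 - q * i) * (1 - q * j') - (- (q * i')) * (- (q * j)))%R => //.
rewrite (_ : _ - _ = 1 - q * (i + j' - q * i * j' + q * j * i'))%R; last by ring.
move: (i + j' - q * i * j' + q * j * i')%R => m; clear -q_ge2.
by have [m_le0 | m_gt0] := Num.Theory.lerP m 0; nia.
Qed.

Lemma exists_exponent :
  exists2 N : nat, (0 < N)%N & [/\ ab_form a b N 0 1, ab_form a b 0 N 1 & c ^+ N = 1].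
Proof.
have c1 : c <> 1 by move=> /eqP/commgP.
have [D D0 [rD1 rD2]] : exists2 D : int, D != 0 & ab_form a b D 0 1 /\ ab_form a b 0 D 1.
  (* [q = 2] works unless [c^4 = 1], and then [c^25 = c]. *)
  have [c4 | c4] := eqVneq (c ^@ (2 * 2)) 1; last exact/ab_relation_exists/eqP.
  apply: (ab_relation_exists (q := 5)) => // c25; apply: c1.
  by rewrite -c25 (_ : 5 * 5 = 2 * 2 * 6 + 1)%R // expgzD expgzM c4 expgz1n mul1g.
have [N N0 rN] : exists2 N : nat, (0 < N)%N & ab_form a b N 0 1 /\ ab_form a b 0 N 1.
  case: (intP D) D0 rD1 rD2 => [|n|n] // _ rD1 rD2; exists n.+1 => //.
  have := ab_formV cA cB rD1; have := ab_formV cA cB rD2.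
  by rewrite invg1 !oppr0 !opprK.
by exists N => //; case: rN => rN1 rN2; split=> //; apply: ab_relation_exponent rN1.
Qed.

Lemma ab_form_reduce N i j g :
    (0 < N)%N -> ab_form a b N 0 1 -> ab_form a b 0 N 1 -> c ^+ N = 1 ->
    ab_form a b i j g ->
  exists r s t : nat, [/\ (r < N)%N, (s < N)%N, (t < N)%N & g = a ^+ r * b ^+ s * c ^+ t].
Proof.
move=> N0 rN1 rN2 cN gij.
have [mi [r rN Ei]] := edivz_nat i N0; have [mj [s sN Ej]] := edivz_nat j N0.
have := ab_formM cA cB (ab_formM cA cB gij (ab_formXz cA cB (- mi) rN1))
                       (ab_formXz cA cB (- mj) rN2).
rewrite !expgz1n !mulg1.
have -> : (i + N%:Z * - mi + 0 * - mj = r)%R by rewrite Ei; ring.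
have -> : (j + 0 * - mi + N%:Z * - mj = s)%R by rewrite Ej; ring.
case=> k ->; have [mk [t tN ->]] := edivz_nat k N0.
have cN' : c ^@ N = 1 := cN.
by exists r, s, t; split; rewrite // expgzD mulrC expgzM cN' expgz1n mul1g.
Qed.

Lemma finite_enum : exists s : seq G, forall g, g \in s.
Proof.
have [N N0 [rN1 rN2 cN]] := exists_exponent.
exists [seq x * c ^+ t | x <- [seq a ^+ r * b ^+ s | r <- iota 0 N, s <- iota 0 N],
                          t <- iota 0 N] => g.
have [i [j gij]] := ab_form_total g.
have [r [s [t [rN sN tN ->]]]] := ab_form_reduce N0 rN1 rN2 cN gij.
by apply: (allpairs_f (fun x t => x * c ^+ t)); [apply: allpairs_f |]; rewrite mem_iota.
Qed.

End Finiteness.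

(* Kept in a module: importing fingroup at top level would let its [nilpotent]
   shadow [Defs.nilpotent]. *)
Module FiniteGroups.
Import all_fingroup all_solvable.

Lemma nilpotent_minimal_nonabelian_pgroup (gT : finGroupType) (G : {group gT}) :
    nilpotent G -> ~~ abelian G -> (forall H : {group gT}, H \proper G -> abelian H) ->
  exists2 p, prime p & p.-group G.
Proof.
move=> nilG nabG minG; set p := pdiv #|G|.
have G_gt1 : 1 < #|G|.
  by rewrite ltnNge; apply: contra nabG => /card_le1_trivg ->; exact: abelian1.
exists p; first exact: pdiv_prime.
have [<- | Op_proper] := eqVproper (pcore_sub p G); first exact: pcore_pgroup.
have [Op'G | Op'_proper] := eqVproper (pcore_sub p^' G).
  have /pgroupP/(_ p (pdiv_prime G_gt1) (pdiv_dvd _)) : p^'.-group G.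
    by rewrite -Op'G pcore_pgroup.
  by rewrite inE /= inE eqxx.
case/dprodP: (nilpotent_pcoreC p nilG) => _ defG cOpOp' _.
by case/negP: nabG; rewrite -defG abelianM !minG.
Qed.

Section Enumerated.
Variable G : Defs.group.
Variable s : seq G.
Hypothesis mem_s : forall g, g \in s.
Hypothesis minG : minimal_nonabelian G.
Hypothesis centralG : forall x y z : G, commute [~ x, y] z.

Lemma undup_finite : finite_axiom (undup s).
Proof. by move=> x; rewrite count_uniq_mem ?undup_uniq // mem_undup mem_s. Qed.

Local Notation FT := (fin_type undup_finite).
HB.instance Definition _ := Finite_isGroup.Build FT (@gmulA G) (@gmul1 G) (@gmulV G).

Lemma enumerated_nilpotent : nilpotent [set: FT].
Proof.
apply/lcnP; exists 2; rewrite lcnSn lcn2; apply/commG1P.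
rewrite gen_subG; apply/subsetP => _ /imset2P [x y _ _ ->]; apply/centP => z _.
exact: centralG.
Qed.

Lemma enumerated_nonabelian : ~~ abelian [set: FT].
Proof.
apply/negP => /centsP abG; apply: minG.1 => x y _ _.
exact: (abG x (in_setT _) y (in_setT _)).
Qed.

Lemma enumerated_proper_abelian (H : {group FT}) : H \proper [set: FT] -> abelian H.
Proof.
case/properP=> _ [x _ Hx]; apply/centsP => y Hy z Hz.
have sH : is_subgroup G (fun g : G => (g : FT) \in H).
  by split; [exact: group1 | split=> [u v | u]; [exact: groupM | rewrite groupV]].
exact: minG.2 _ sH (ex_intro _ x (negP Hx)) y z Hy Hz.
Qed.

Lemma enumerated_pgroup : exists2 p, prime p & finite_pgroup G p.
Proof.
have [p p_pr /p_natP [k cardG]] := nilpotent_minimal_nonabelian_pgroup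
  enumerated_nilpotent enumerated_nonabelian enumerated_proper_abelian.
exists p => //; exists k, (enum [set: FT]).
split; first exact: (@uniq_NoDup FT _ (enum_uniq _)).
split=> [x | ]; first by apply/(@InP FT); rewrite mem_enum in_setT.
by rewrite -size_length; exact: etrans (esym (cardE _)) cardG.
Qed.

End Enumerated.
End FiniteGroups.

Theorem proposition2p6 (G : group) :
  nilpotent G ->
  (in_Yn G <->
   abelian_group G \/
   exists p : nat, prime p /\ finite_pgroup G p /\ minimal_nonabelian G).
Proof.
move=> nilG; split=> [YnG | [abG | [p [_ [_ minG]]]]].
- have [abG | nabG] := classic (abelian_group G); [by left | right].
  have minG := Yn_minimal_nonabelian nilG YnG nabG.
  have [a [b nab]] : exists a b : G, ~ commute a b.
    apply: NNPP => all_comm; apply: nabG => a b _ _.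
    by apply: NNPP => nab; apply: all_comm; exists a, b.
  have [s mem_s] := finite_enum minG nilG nab.
  have [p p_pr pG] := FiniteGroups.enumerated_pgroup mem_s minG (commg_central minG nilG).
  by exists p.
- by move=> A _ nabA; case: nabA => x y _ _; exact: abG.
- exact: minimal_nonabelian_Yn.
Qed.
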